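(* Let $\ell_0\ge 2$ be an integer and let $\varphi_{\ell,k},\psi_{\ell,k}$ be the periodized, level-$\ell$ scaling functions and wavelets of the biorthogonal B-spline wavelet construction of order $(2,2)$ described in the context, and $\xi_q(x)=e^{2\pi i q x}$. Then for every integer $\ell\ge \ell_0$, every $k\in\{0,1,\dots,2^\ell-1\}$, every $q\in\mathbb{Z}\setminus\{0\}$, every $(\alpha_1,\alpha_2)\in\{0,1\}^2$ and every $\gamma\in[0,2]$, $$|(D^{\alpha_1}\varphi_{\ell,k},D^{\alpha_2}\xi_q)|\le 2^{\alpha_1+\alpha_2}\,2^{(\frac32-\gamma)\ell}\,|\pi q|^{\gamma-2+\alpha_1+\alpha_2},$$ $$|(D^{\alpha_1}\psi_{\ell,k},D^{\alpha_2}\xi_q)|\le 2^{\alpha_1+\alpha_2+1-\gamma}\,\|\mathbf b\|_2\,\|\mathbf b\|_0^{1/2}\,2^{(\frac32-\gamma)\ell}\,|\pi q|^{\gamma-2+\alpha_1+\alpha_2}.$$ Moreover, for $q=0$: $|(\varphi_{\ell,k}',\xi_0')|=|(\psi_{\ell,k}',\xi_0')|=0$, $|(\varphi_{\ell,k}',\xi_0)|=|(\psi_{\ell,k}',\xi_0)|=0$, $|(\varphi_{\ell,k},\xi_0)|=2^{-\ell/2}$ and $|(\psi_{\ell,k},\xi_0)|=0$.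
   Context: Functions are complex-valued on $\mathcal{D}=(0,1)$, $(u,v)=\int_0^1 u(x)\overline{v(x)}\,dx$, $D^0u=u$, $D^1u=u'$ (distributional derivative). Let $\varphi(x)=\max\{0,1-|x|\}$ be the hat function (the primal scaling function of the biorthogonal B-spline wavelets of order $(d,\tilde d)=(2,2)$, with primal filter $\mathbf a_{[-1:1]}=[\tfrac12,1,\tfrac12]$, dual filter $\tilde{\mathbf a}_{[-2:2]}=[-\tfrac14,\tfrac12,\tfrac32,\tfrac12,-\tfrac14]$), and let the mother wavelet be $\psi(x)=\sum_{j=-1}^{3} b_j\varphi(2x-j)$ with primal wavelet filter $\mathbf b=(b_{-1},b_0,b_1,b_2,b_3)=(\tfrac14,\tfrac12,-\tfrac32,\tfrac12,\tfrac14)$; $\|\mathbf b\|_2$ is its Euclidean norm and $\|\mathbf b\|_0$ its number of nonzero entries. For $\ell\in\mathbb{N}_0$, $k\in\mathbb{Z}$ set $\varphi_{\ell,k}(x)=2^{\ell/2}\varphi(2^\ell x-k)$ and $\psi_{\ell,k}(x)=2^{\ell/2}\psi(2^\ell x-k)$; in the statement these are replaced by their 1-periodizations $f^{\rm per}(x)=\sum_{j\in\mathbb{Z}}f(x+j)$ restricted to $(0,1)$, indexed by $k\in\{0,\dots,2^\ell-1\}$. *)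

From Stdlib Require Import Reals List.
Import ListNotations.
From Coquelicot Require Import Coquelicot.
Open Scope R_scope.

Definition hat (x : R) : R := Rmax 0 (1 - Rabs x).

(* Primal wavelet filter b = (b_{-1}, b_0, b_1, b_2, b_3). *)
Definition bfilt : list R := [1/4; 1/2; -3/2; 1/2; 1/4].

Definition psi (x : R) : R :=
  fold_right Rplus 0
    (map (fun i => nth i bfilt 0 * hat (2 * x - (INR i - 1))) (seq 0 (length bfilt))).

Definition bnorm2 : R := sqrt (fold_right Rplus 0 (map (fun c => c * c) bfilt)).
Definition bnorm0 : nat := length (filter (fun c => if Req_EM_T c 0 then false else true) bfilt).

Definition dilate (f : R -> R) (l k : nat) (x : R) : R :=
  Rpower 2 (INR l / 2) * f (2 ^ l * x - INR k).

(* 1-periodization  f^per(x) = sum_{j in Z} f(x + j), the sum over Z written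
   as the sum over j >= 0 plus the sum over j <= -1. *)
Definition per (f : R -> R) (x : R) : R :=
  Series (fun n => f (x + INR n)) + Series (fun n => f (x - INR (S n))).

Definition phi_lk (l k : nat) : R -> R := per (dilate hat l k).
Definition psi_lk (l k : nat) : R -> R := per (dilate psi l k).

Definition xi (q : Z) (x : R) : C :=
  (cos (2 * PI * IZR q * x), sin (2 * PI * IZR q * x)).

(* D^0 u = u, D^1 u = u' (componentwise derivative of real and imaginary part;
   for the piecewise-linear functions involved this is the a.e. / distributional
   derivative, point values at the finitely many kinks being irrelevant for the
   integrals below). *)
Definition Dc (a : nat) (f : R -> C) : R -> C :=
  match a with
  | O => f
  | _ => fun x => (Derive (fun t => fst (f t)) x, Derive (fun t => snd (f t)) x)
  end.

Definition ip (u v : R -> C) : C :=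
  (RInt (fun x => fst (Cmult (u x) (Cconj (v x)))) 0 1,
   RInt (fun x => snd (Cmult (u x) (Cconj (v x)))) 0 1).

Definition cf (f : R -> R) : R -> C := fun x => RtoC (f x).

From Stdlib Require Import Reals Lra Lia ZArith List.
From Coquelicot Require Import Coquelicot.
Import ListNotations.
Open Scope R_scope.

(* On [0, 1] the periodized functions are continuous and affine on each cell of a dyadic
   grid, so integrating by parts cell by cell (the boundary terms cancel by periodicity)
   moves every derivative onto [xi_q], and [D xi_q = 2 pi i q xi_q].  Hence
   [|(D^a1 f^per, D^a2 xi_q)| = |2 pi q|^(a1+a2) |int f conj(xi_q)|], where, after unfolding
   the periodization, the integral runs over the support of [f].  For a hat dilated by [N]
   this integral is a unimodular phase times [h(2 pi q / N) / N], with
   [h(w) = (sin(w/2) / (w/2))^2 <= min(1, 4/w^2) <= (|w|/2)^(g-2)] for [0 <= g <= 2].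
   For [phi_lk] take [N = 2^l]; [psi_lk] combines five hats at level [l+1] whose phases sum
   to modulus at most [sum |b_j| = 3 <= |b|_2 |b|_0^(1/2)], and to [sum b_j = 0] when [q = 0]. *)

(** * The hat function and grid-affine functions *)

Lemma hat_eq_0 y : y <= -1 \/ 1 <= y -> hat y = 0.
Proof.
  intros Hy.
  assert (1 <= Rabs y) by (destruct Hy; [rewrite Rabs_left1 | rewrite Rabs_right]; lra).
  unfold hat, Rmax; destruct Rle_dec; lra.
Qed.

Lemma hat_of_nonneg y : 0 <= y <= 1 -> hat y = 1 - y.
Proof. intros; unfold hat, Rmax; rewrite Rabs_right by lra; destruct Rle_dec; lra. Qed.

Lemma hat_of_nonpos y : -1 <= y <= 0 -> hat y = 1 + y.
Proof. intros; unfold hat, Rmax; rewrite Rabs_left1 by lra; destruct Rle_dec; lra. Qed.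

Lemma continuous_hat x : continuous hat x.
Proof.
  apply continuous_ext with (f := fun y => ((1 - Rabs y) + Rabs (1 - Rabs y)) / 2).
  { intros y; unfold hat, Rmax; destruct Rle_dec.
    - rewrite (Rabs_right (1 - Rabs y)); lra.
    - rewrite (Rabs_left (1 - Rabs y)); lra. }
  assert (Hlin : continuous (fun y => 1 - Rabs y) x).
  { apply (continuous_minus (fun _ => 1) Rabs); [apply continuous_const | apply continuous_Rabs]. }
  apply (continuous_mult (fun y => (1 - Rabs y) + Rabs (1 - Rabs y)) (fun _ => /2));
    [|apply continuous_const].
  apply (continuous_plus (fun y => 1 - Rabs y) (fun y => Rabs (1 - Rabs y))); auto.
  now apply continuous_Rabs_comp.
Qed.

Lemma hat_affine_on_unit_cells (z : Z) y : IZR z <= y <= IZR z + 1 ->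
  hat y = hat (IZR z) + (y - IZR z) * (hat (IZR z + 1) - hat (IZR z)).
Proof.
  intros Hy.
  destruct (Z_lt_le_dec z (-1)) as [Hlt|Hge].
  { assert (Hz : IZR z <= -2) by (apply IZR_le; lia).
    rewrite !hat_eq_0 by lra. lra. }
  destruct (Z.eq_dec z (-1)) as [->|Hm1].
  { simpl in *. rewrite (hat_of_nonpos y), (hat_eq_0 (-1)), (hat_of_nonpos (-1 + 1)); lra. }
  destruct (Z.eq_dec z 0) as [->|H0].
  { simpl in *. rewrite (hat_eq_0 (0 + 1)), !hat_of_nonneg; lra. }
  assert (Hz : 1 <= IZR z) by (apply IZR_le; lia).
  rewrite !hat_eq_0 by lra. lra.
Qed.

Definition grid_affine (N : R) (A : R -> R) : Prop :=
  forall (m : Z) x, IZR m / N <= x <= (IZR m + 1) / N ->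
    A x = A (IZR m / N) + (N * x - IZR m) * (A ((IZR m + 1) / N) - A (IZR m / N)).

Lemma grid_affine_ext N A B : (forall x, A x = B x) -> grid_affine N A -> grid_affine N B.
Proof. intros He HA m x Hx. rewrite <- !He. now apply HA. Qed.

Lemma grid_affine_plus N A B :
  grid_affine N A -> grid_affine N B -> grid_affine N (fun x => A x + B x).
Proof. intros HA HB m x Hx. rewrite (HA m x Hx), (HB m x Hx). ring. Qed.

Lemma grid_affine_scal N c A : grid_affine N A -> grid_affine N (fun x => c * A x).
Proof. intros HA m x Hx. rewrite (HA m x Hx). ring. Qed.

Lemma grid_affine_hat N (z : Z) : 0 < N -> grid_affine N (fun x => hat (N * x - IZR z)).
Proof.
  intros HN m x Hx.
  assert (Ediv : forall t, N * (t / N) = t) by (intros; field; lra).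
  assert (Hy : IZR (m - z) <= N * x - IZR z <= IZR (m - z) + 1).
  { rewrite minus_IZR. destruct Hx as [H1 H2].
    apply (Rmult_le_compat_l N) in H1, H2; try lra. rewrite Ediv in H1, H2. lra. }
  rewrite !Ediv, (hat_affine_on_unit_cells _ _ Hy), minus_IZR.
  replace (IZR m + 1 - IZR z) with (IZR m - IZR z + 1) by ring. ring.
Qed.

Lemma grid_affine_shift (Nn : nat) A (j : Z) : (0 < Nn)%nat ->
  grid_affine (INR Nn) A -> grid_affine (INR Nn) (fun x => A (x + IZR j)).
Proof.
  intros HNn HA m x Hx.
  assert (HN : 0 < INR Nn) by now apply lt_0_INR.
  set (m' := (m + j * Z.of_nat Nn)%Z).
  assert (Hm' : IZR m' = IZR m + IZR j * INR Nn)
    by (unfold m'; rewrite plus_IZR, mult_IZR, <- INR_IZR_INZ; reflexivity).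
  assert (E0 : IZR m' / INR Nn = IZR m / INR Nn + IZR j) by (rewrite Hm'; field; lra).
  assert (E1 : (IZR m' + 1) / INR Nn = (IZR m + 1) / INR Nn + IZR j) by (rewrite Hm'; field; lra).
  assert (Ex : INR Nn * (x + IZR j) - IZR m' = INR Nn * x - IZR m) by (rewrite Hm'; ring).
  pose proof (HA m' (x + IZR j)) as H. rewrite E0, E1, Ex in H. apply H; lra.
Qed.

(** * Integration by parts against a grid-affine function *)

Section By_parts.

Variables (Nn : nat) (F A g g' : R -> R).
Hypotheses (HNn : (0 < Nn)%nat) (HA : grid_affine (INR Nn) A)
  (HFA : forall x, 0 <= x <= 1 -> F x = A x)
  (Hg : forall x, is_derive g x (g' x)) (Hg' : forall x, continuous g' x).

Let N := INR Nn.

Lemma is_RInt_by_parts_cell (m : nat) : INR m + 1 <= N ->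
  is_RInt (fun x => Derive F x * g x + A x * g' x) (INR m / N) ((INR m + 1) / N)
    (A ((INR m + 1) / N) * g ((INR m + 1) / N) - A (INR m / N) * g (INR m / N)).
Proof.
  intros Hm.
  assert (HN : 0 < N) by now apply lt_0_INR.
  set (u := INR m / N); set (v := (INR m + 1) / N).
  assert (Hu : 0 <= u) by (apply Rdiv_le_0_compat; [apply pos_INR | lra]).
  assert (Hv : v <= 1) by (apply (Rmult_le_reg_r N); unfold v; [lra | field_simplify; lra]).
  assert (Huv : u < v) by (apply Rmult_lt_compat_r; [apply Rinv_0_lt_compat |]; lra).
  set (s := N * (A v - A u)).
  set (aff := fun x => A u + (N * x - INR m) * (A v - A u)).
  assert (HAaff : forall x, u <= x <= v -> A x = aff x).
  { intros x Hx. unfold aff, u, v in *. rewrite (INR_IZR_INZ m) in *. now apply HA. }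
  assert (Haff : forall x, is_derive aff x s) by (intros; unfold aff, s; auto_derive; auto; ring).
  assert (HaffC : forall x, continuous aff x)
    by (intros; apply (ex_derive_continuous (V := R_NormedModule)); eexists; apply Haff).
  assert (HgC : forall x, continuous g x)
    by (intros; apply (ex_derive_continuous (V := R_NormedModule)); eexists; apply Hg).
  assert (HDF : forall x, u < x < v -> Derive F x = s).
  { intros x Hx. apply is_derive_unique, (is_derive_ext_loc aff); [|apply Haff].
    assert (Hr : 0 < Rmin (x - u) (v - x)) by (apply Rmin_glb_lt; lra).
    exists (mkposreal _ Hr); intros t Ht.
    cbn in Ht; unfold AbsRing_ball, abs, minus, plus, opp in Ht; simpl in Ht.
    apply Rabs_def2 in Ht.
    pose proof (Rmin_l (x - u) (v - x)); pose proof (Rmin_r (x - u) (v - x)).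
    rewrite HFA by lra. symmetry; apply HAaff; lra. }
  pose proof (is_RInt_derive (fun x => aff x * g x) (fun x => s * g x + aff x * g' x) u v
    (fun x _ => is_derive_mult aff g x s (g' x) (Haff x) (Hg x) Rmult_comm)
    (fun x _ => continuous_plus _ _ x
       (continuous_mult (fun _ => s) g x (continuous_const _ x) (HgC x))
       (continuous_mult aff g' x (HaffC x) (Hg' x)))) as Hprod.
  rewrite (HAaff u), (HAaff v) by lra.
  apply (is_RInt_ext (fun x => s * g x + aff x * g' x)); [|exact Hprod].
  intros x Hx. rewrite Rmin_left, Rmax_right in Hx by lra.
  rewrite HDF, HAaff by lra. reflexivity.
Qed.

Lemma RInt_Derive_mul_periodic : (forall x, continuous A x) -> A 1 = A 0 -> g 1 = g 0 ->
  RInt (fun x => Derive F x * g x) 0 1 = - RInt (fun x => A x * g' x) 0 1.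
Proof.
  intros HAC HA1 Hg1.
  assert (HN : 0 < N) by now apply lt_0_INR.
  assert (Hcells : forall M, (M <= Nn)%nat ->
    is_RInt (fun x => Derive F x * g x + A x * g' x) 0 (INR M / N)
      (A (INR M / N) * g (INR M / N) - A 0 * g 0)).
  { induction M as [|M IH]; intros HM.
    - replace (INR 0 / N) with 0 by (simpl; field; lra).
      replace (A 0 * g 0 - A 0 * g 0) with (@zero R_NormedModule) by (cbn; ring).
      apply is_RInt_point.
    - replace (A (INR (S M) / N) * g (INR (S M) / N) - A 0 * g 0)
        with (plus (A (INR M / N) * g (INR M / N) - A 0 * g 0)
                (A (INR (S M) / N) * g (INR (S M) / N) - A (INR M / N) * g (INR M / N)))
        by (cbn; ring).
      apply (is_RInt_Chasles (V := R_NormedModule) _ 0 (INR M / N)); [apply IH; lia|].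
      rewrite S_INR; apply is_RInt_by_parts_cell.
      rewrite <- S_INR; now apply le_INR. }
  assert (HAg' : ex_RInt (fun x => A x * g' x) 0 1)
    by (apply (ex_RInt_continuous (V := R_CompleteNormedModule)); intros;
        apply (continuous_mult A g'); auto).
  pose proof (Hcells Nn (le_n _)) as Hall.
  replace (INR Nn / N) with 1 in Hall by (unfold N in *; field; lra).
  rewrite HA1, Hg1 in Hall.
  pose proof (is_RInt_minus _ _ _ _ _ _ Hall (RInt_correct _ _ _ HAg')) as HDFg.
  apply is_RInt_unique.
  apply (is_RInt_ext (fun x => minus (Derive F x * g x + A x * g' x) (A x * g' x)));
    [intros; cbn; ring|].
  replace (- RInt (fun x => A x * g' x) 0 1)
    with (minus (A 0 * g 0 - A 0 * g 0) (RInt (fun x => A x * g' x) 0 1)) by (cbn; ring).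
  exact HDFg.
Qed.

End By_parts.

(** * Periodization *)

Lemma Series_of_zero_from_2 (u : nat -> R) :
  (forall n, (2 <= n)%nat -> u n = 0) -> Series u = u 0%nat + u 1%nat.
Proof.
  intros Hu.
  assert (Htail : forall n, u (2 + n)%nat = 0 * (1 / 2) ^ n) by (intros; rewrite Hu by lia; ring).
  assert (Hex : ex_series u).
  { apply (ex_series_incr_n u 2), (ex_series_ext (fun n => 0 * (1 / 2) ^ n)); [intros; auto|].
    apply (ex_series_scal_l (V := R_NormedModule) 0), ex_series_geom.
    rewrite Rabs_right; lra. }
  rewrite (Series_incr_n u 2), (Series_ext _ _ Htail), Series_scal_l by (auto; lia).
  simpl. ring.
Qed.

Lemma per_eq_three_shifts f x :
  (forall y, 2 <= y -> f y = 0) -> (forall y, y <= -1 -> f y = 0) -> 0 <= x <= 1 ->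
  per f x = f (x - 1) + f x + f (x + 1).
Proof.
  intros Hf2 Hf1 Hx. unfold per.
  rewrite !Series_of_zero_from_2.
  - simpl. rewrite Rplus_0_r, (Hf1 (x - (1 + 1))) by lra. ring.
  - intros n Hn. apply Hf1. apply le_INR in Hn. rewrite S_INR. simpl in Hn. lra.
  - intros n Hn. apply Hf2. apply le_INR in Hn. simpl in Hn. lra.
Qed.

Lemma is_RInt_sum_of_unit_shifts {V : CompleteNormedModule R_AbsRing} (h : R -> V) z :
  is_RInt h (-1) 2 z -> is_RInt (fun x => plus (plus (h (x - 1)) (h x)) (h (x + 1))) 0 1 z.
Proof.
  intros Hz.
  assert (Hex : forall a b, -1 <= a <= b -> b <= 2 -> ex_RInt h a b).
  { intros a b Ha Hb. apply (ex_RInt_Chasles_2 _ (-1)).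
    - lra.
    - apply (ex_RInt_Chasles_1 _ _ _ 2); [lra | exists z; exact Hz]. }
  assert (Hshift : forall s, -1 <= s -> s + 1 <= 2 ->
    is_RInt (fun x => h (x + s)) 0 1 (RInt h s (s + 1))).
  { intros s Hs1 Hs2.
    apply (is_RInt_ext (fun x => scal 1 (h (1 * x + s)))).
    { intros x _; rewrite Rmult_1_l. exact (scal_one _). }
    apply (is_RInt_comp_lin h 1 s 0 1).
    replace (1 * 0 + s) with s by ring. replace (1 * 1 + s) with (s + 1) by ring.
    apply RInt_correct, Hex; lra. }
  replace z with (plus (plus (RInt h (-1) (-1 + 1)) (RInt h (0) (0 + 1))) (RInt h 1 (1 + 1))).
  - apply (is_RInt_plus (fun x => plus (h (x - 1)) (h x)) (fun x => h (x + 1)) 0 1).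
    + apply (is_RInt_plus (fun x => h (x - 1)) h 0 1).
      * apply (is_RInt_ext (fun x => h (x + -1))); [intros; f_equal; ring|]. apply Hshift; lra.
      * apply (is_RInt_ext (fun x => h (x + 0))); [intros; f_equal; ring|]. apply Hshift; lra.
    + apply Hshift; lra.
  - rewrite <- (is_RInt_unique _ _ _ _ Hz).
    replace (-1 + 1) with 0 by ring. replace (0 + 1) with 1 by ring. replace (1 + 1) with 2 by ring.
    rewrite (RInt_Chasles h (-1) 0 1), (RInt_Chasles h (-1) 1 2); try (apply Hex; lra).
    reflexivity.
Qed.

Definition cis (t : R) : C := (cos t, sin t).

Lemma cos_sin_add_2PI_Z y (q : Z) :
  cos (y + 2 * PI * IZR q) = cos y /\ sin (y + 2 * PI * IZR q) = sin y.
Proof.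
  destruct q as [|p|p].
  - rewrite Rmult_0_r, Rplus_0_r. auto.
  - rewrite <- (positive_nat_Z p), <- INR_IZR_INZ.
    replace (2 * PI * INR (Pos.to_nat p)) with (2 * INR (Pos.to_nat p) * PI) by ring.
    split; [apply cos_period | apply sin_period].
  - rewrite <- Pos2Z.opp_pos, opp_IZR, <- (positive_nat_Z p), <- INR_IZR_INZ.
    set (n := Pos.to_nat p).
    rewrite <- (cos_period (y + 2 * PI * - INR n) n), <- (sin_period (y + 2 * PI * - INR n) n).
    replace (y + 2 * PI * - INR n + 2 * INR n * PI) with y by ring. auto.
Qed.

Lemma xi_add_1 q x : xi q (x + 1) = xi q x.
Proof.
  unfold xi. replace (2 * PI * IZR q * (x + 1)) with (2 * PI * IZR q * x + 2 * PI * IZR q) by ring.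
  now destruct (cos_sin_add_2PI_Z (2 * PI * IZR q * x) q) as [-> ->].
Qed.

Lemma is_RInt_per_xi (f : R -> R) q (z : C) :
  is_RInt (V := C_R_NormedModule) (fun x => scal (f x) (xi q x)) (-1) 2 z ->
  is_RInt (V := C_R_NormedModule) (fun x => scal (f (x - 1) + f x + f (x + 1)) (xi q x)) 0 1 z.
Proof.
  intros Hz. apply (is_RInt_sum_of_unit_shifts (V := C_R_CompleteNormedModule)) in Hz.
  revert Hz; apply is_RInt_ext. intros x _.
  assert (E : xi q (x - 1) = xi q x) by (rewrite <- (xi_add_1 q (x - 1)); f_equal; ring).
  rewrite E, xi_add_1. destruct (xi q x) as [c s].
  apply injective_projections; cbn; unfold plus, scal, mult; cbn; ring.
Qed.

(** * Inner products with derivatives of the exponentials *)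

Lemma is_RInt_lin2 (f g : R -> R) a b u v c d :
  is_RInt f a b u -> is_RInt g a b v -> is_RInt (fun x => c * f x + d * g x) a b (c * u + d * v).
Proof.
  intros Hf Hg.
  apply (is_RInt_plus (V := R_NormedModule) (fun x => c * f x) (fun x => d * g x));
    now apply (is_RInt_scal (V := R_NormedModule)).
Qed.

Definition xi_deriv_factor (q : Z) : C := (0, 2 * PI * IZR q).

Lemma is_derive_Cconj_Cmult_xi (c : C) q x :
  is_derive (fun t => fst (Cconj (c * xi q t))) x (fst (Cconj (c * xi_deriv_factor q * xi q x))) /\
  is_derive (fun t => snd (Cconj (c * xi q t))) x (snd (Cconj (c * xi_deriv_factor q * xi q x))).
Proof.
  destruct c as [c1 c2]; unfold xi, xi_deriv_factor, Cconj, Cmult; cbn.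
  split; auto_derive; auto; ring.
Qed.

Lemma ip_ext (u u' v v' : R -> C) :
  (forall x, 0 < x < 1 -> u x = u' x /\ v x = v' x) -> ip u v = ip u' v'.
Proof.
  intros H. unfold ip. f_equal; apply RInt_ext; rewrite Rmin_left, Rmax_right by lra;
    intros x Hx; destruct (H x Hx) as [-> ->]; reflexivity.
Qed.

Lemma ip_cf_Cmult_xi (A : R -> R) q (c z : C) :
  is_RInt (V := C_R_NormedModule) (fun x => scal (A x) (xi q x)) 0 1 z ->
  ip (cf A) (fun x => c * xi q x)%C = Cconj (c * z).
Proof.
  intros Hz. destruct c as [c1 c2], z as [z1 z2].
  pose proof (is_RInt_fct_extend_fst _ _ _ _ Hz) as H1.
  pose proof (is_RInt_fct_extend_snd _ _ _ _ Hz) as H2. cbn in H1, H2.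
  unfold ip. apply injective_projections; cbn -[RInt]; apply is_RInt_unique.
  - replace (c1 * z1 - c2 * z2) with (c1 * z1 + - c2 * z2) by ring.
    eapply is_RInt_ext; [|exact (is_RInt_lin2 _ _ _ _ _ _ c1 (- c2) H1 H2)]. intros; cbn; ring.
  - replace (- (c1 * z2 + c2 * z1)) with (- c2 * z1 + - c1 * z2) by ring.
    eapply is_RInt_ext; [|exact (is_RInt_lin2 _ _ _ _ _ _ (- c2) (- c1) H1 H2)]. intros; cbn; ring.
Qed.

Lemma Dc_xi q a x : (a <= 1)%nat -> Dc a (xi q) x = (xi_deriv_factor q ^ a * xi q x)%C.
Proof.
  intros Ha. destruct a as [|[|]]; [| |lia].
  - symmetry; apply Cmult_1_l.
  - rewrite Cpow_1_r. unfold xi, xi_deriv_factor, Dc.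
    apply injective_projections; cbn; apply is_derive_unique; auto_derive; auto; ring.
Qed.

Lemma Cmod_xi_deriv_factor q : Cmod (xi_deriv_factor q) = Rabs (2 * PI * IZR q).
Proof.
  unfold Cmod, xi_deriv_factor; cbn [fst snd].
  rewrite <- sqrt_Rsqr_abs. f_equal. unfold Rsqr. ring.
Qed.

Section Fourier_coefficients_of_derivatives.

Variables (Nn : nat) (F A : R -> R).
Hypotheses (HNn : (0 < Nn)%nat) (HA : grid_affine (INR Nn) A) (HAC : forall x, continuous A x)
  (HA1 : A 1 = A 0) (HFA : forall x, 0 <= x <= 1 -> F x = A x).

Lemma ip_Dc1_Cmult_xi q (c : C) :
  ip (Dc 1 (cf F)) (fun x => c * xi q x)%C =
  (- ip (cf A) (fun x => c * xi_deriv_factor q * xi q x))%C.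
Proof.
  assert (Hbp : forall p : C -> R,
    (forall c' x, is_derive (fun t => p (Cconj (c' * xi q t))) x
                    (p (Cconj (c' * xi_deriv_factor q * xi q x)))) ->
    RInt (fun x => Derive F x * p (Cconj (c * xi q x))) 0 1 =
    - RInt (fun x => A x * p (Cconj (c * xi_deriv_factor q * xi q x))) 0 1).
  { intros p Hp. apply (RInt_Derive_mul_periodic Nn); auto.
    - intros x. apply (ex_derive_continuous (V := R_NormedModule)).
      eexists. apply Hp.
    - rewrite <- (Rplus_0_l 1), xi_add_1. reflexivity. }
  assert (Hfst : forall d u, fst ((d, 0) * u)%C = d * fst u) by (intros; cbn; ring).
  assert (Hsnd : forall d u, snd ((d, 0) * u)%C = d * snd u) by (intros; cbn; ring).
  unfold ip, Dc, cf, RtoC. apply injective_projections; cbn -[RInt Cconj Cmult xi].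
  - rewrite (RInt_ext _ (fun x => Derive F x * fst (Cconj (c * xi q x))))
      by (intros; rewrite Derive_const; apply Hfst).
    rewrite (RInt_ext (fun x => fst ((A x, 0) * Cconj (c * xi_deriv_factor q * xi q x))%C)
      (fun x => A x * fst (Cconj (c * xi_deriv_factor q * xi q x)))) by (intros; apply Hfst).
    apply Hbp; intros; apply is_derive_Cconj_Cmult_xi.
  - rewrite (RInt_ext _ (fun x => Derive F x * snd (Cconj (c * xi q x))))
      by (intros; rewrite Derive_const; apply Hsnd).
    rewrite (RInt_ext (fun x => snd ((A x, 0) * Cconj (c * xi_deriv_factor q * xi q x))%C)
      (fun x => A x * snd (Cconj (c * xi_deriv_factor q * xi q x)))) by (intros; apply Hsnd).
    apply Hbp; intros; apply is_derive_Cconj_Cmult_xi.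
Qed.

Lemma Cmod_ip_Dc_xi q a1 a2 (z : C) : (a1 <= 1)%nat -> (a2 <= 1)%nat ->
  is_RInt (V := C_R_NormedModule) (fun x => scal (A x) (xi q x)) 0 1 z ->
  Cmod (ip (Dc a1 (cf F)) (Dc a2 (xi q))) = Rabs (2 * PI * IZR q) ^ (a1 + a2) * Cmod z.
Proof.
  intros Ha1 Ha2 Hz.
  destruct a1 as [|[|]]; [| |lia].
  - rewrite (ip_ext _ (cf A) _ (fun x => xi_deriv_factor q ^ a2 * xi q x)%C)
      by (intros x Hx; split; [unfold Dc, cf; rewrite HFA by lra | apply Dc_xi]; auto).
    rewrite (ip_cf_Cmult_xi A q _ z Hz), Cmod_conj, Cmod_mult, Cmod_pow, Cmod_xi_deriv_factor.
    reflexivity.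
  - rewrite (ip_ext _ (Dc 1 (cf F)) _ (fun x => xi_deriv_factor q ^ a2 * xi q x)%C)
      by (intros x Hx; split; [|apply Dc_xi]; auto).
    rewrite ip_Dc1_Cmult_xi, (ip_cf_Cmult_xi A q _ z Hz), Cmod_opp, Cmod_conj, !Cmod_mult,
      Cmod_pow, Cmod_xi_deriv_factor.
    simpl. ring.
Qed.

End Fourier_coefficients_of_derivatives.

Lemma Cmod_ip_per_xi (f : R -> R) (Nn : nat) q a1 a2 (z : C) :
  (0 < Nn)%nat -> grid_affine (INR Nn) f -> (forall x, continuous f x) ->
  (forall y, 2 <= y -> f y = 0) -> (forall y, y <= -1 -> f y = 0) ->
  (a1 <= 1)%nat -> (a2 <= 1)%nat ->
  is_RInt (V := C_R_NormedModule) (fun x => scal (f x) (xi q x)) (-1) 2 z ->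
  Cmod (ip (Dc a1 (cf (per f))) (Dc a2 (xi q))) = Rabs (2 * PI * IZR q) ^ (a1 + a2) * Cmod z.
Proof.
  intros HNn Hf Hfc Hf2 Hf1 Ha1 Ha2 Hz.
  assert (Hshift : forall (j : Z), grid_affine (INR Nn) (fun x => f (x + IZR j)) /\
                                   forall x, continuous (fun t => f (t + IZR j)) x).
  { intros j; split; [now apply grid_affine_shift|].
    intros x. apply (continuous_comp (fun t => t + IZR j) f); [|apply Hfc].
    apply (continuous_plus (fun t => t) (fun _ => IZR j));
      [apply continuous_id | apply continuous_const]. }
  destruct (Hshift (-1)%Z) as [Hm1 Hm1c], (Hshift 1%Z) as [Hp1 Hp1c].
  apply (Cmod_ip_Dc_xi Nn _ (fun x => f (x + IZR (-1)) + f x + f (x + IZR 1))); auto.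
  - repeat apply grid_affine_plus; auto.
  - intros x. apply (continuous_plus (fun x => f (x + IZR (-1)) + f x) (fun x => f (x + IZR 1)));
      [apply (continuous_plus (fun x => f (x + IZR (-1))) f)|]; auto.
  - simpl. rewrite (Hf2 (1 + 1)), (Hf1 (0 + -1)) by lra.
    replace (1 + -1) with 0 by ring. replace (0 + 1) with 1 by ring. ring.
  - intros x Hx. rewrite per_eq_three_shifts by auto. reflexivity.
  - apply (is_RInt_ext (fun x => scal (f (x - 1) + f x + f (x + 1)) (xi q x))).
    + intros x _. reflexivity.
    + now apply is_RInt_per_xi.
Qed.

(** * The Fourier transform of the hat function *)

(* [hat_ft w = int hat(z) e^(iwz) dz = (sin(w/2) / (w/2))^2]. *)
Definition hat_ft (w : R) : R := if Req_EM_T w 0 then 1 else 2 * (1 - cos w) / (w * w).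

Lemma is_RInt_of_antiderivative (G g h : R -> R) a b v : a < b ->
  (forall x, is_derive G x (g x)) -> (forall x, continuous g x) ->
  (forall x, a < x < b -> h x = g x) -> G b - G a = v -> is_RInt h a b v.
Proof.
  intros Hab HG Hg Hh <-.
  apply (is_RInt_ext g); [|exact (is_RInt_derive G g a b (fun x _ => HG x) (fun x _ => Hg x))].
  intros x Hx. rewrite Rmin_left, Rmax_right in Hx by lra. symmetry; apply Hh; lra.
Qed.

Lemma is_RInt_Chasles_R (h : R -> R) a b c u v :
  is_RInt h a b u -> is_RInt h b c v -> is_RInt h a c (u + v).
Proof. apply (is_RInt_Chasles (V := R_NormedModule)). Qed.

Ltac continuous_of_derivable :=
  intros ?; apply (ex_derive_continuous (V := R_NormedModule)); auto_derive; auto.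

Lemma is_RInt_hat_cos w : is_RInt (fun z => hat z * cos (w * z)) (-1) 1 (hat_ft w).
Proof.
  unfold hat_ft; destruct (Req_EM_T w 0) as [->|Hw].
  - replace 1 with (1 / 2 + 1 / 2) at 2 by field.
    apply (is_RInt_Chasles_R _ _ 0).
    + apply (is_RInt_of_antiderivative (fun z => z + z * z / 2) (fun z => 1 + z));
        [lra | intros; auto_derive; auto; field | continuous_of_derivable | |field].
      intros x Hx. rewrite Rmult_0_l, cos_0, hat_of_nonpos by lra. ring.
    + apply (is_RInt_of_antiderivative (fun z => z - z * z / 2) (fun z => 1 - z));
        [lra | intros; auto_derive; auto; field | continuous_of_derivable | |field].
      intros x Hx. rewrite Rmult_0_l, cos_0, hat_of_nonneg by lra. ring.
  - replace (2 * (1 - cos w) / (w * w)) with ((1 - cos w) / (w * w) + (1 - cos w) / (w * w))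
      by (field; auto).
    apply (is_RInt_Chasles_R _ _ 0).
    + apply (is_RInt_of_antiderivative (fun z => (1 + z) * sin (w * z) / w + cos (w * z) / (w * w))
        (fun z => (1 + z) * cos (w * z)));
        [lra | intros; auto_derive; auto; field; auto | continuous_of_derivable | |].
      * intros x Hx. rewrite hat_of_nonpos by lra. ring.
      * replace (w * -1) with (- w) by ring. rewrite Rmult_0_r, sin_0, cos_0, cos_neg. field; auto.
    + apply (is_RInt_of_antiderivative (fun z => (1 - z) * sin (w * z) / w - cos (w * z) / (w * w))
        (fun z => (1 - z) * cos (w * z)));
        [lra | intros; auto_derive; auto; field; auto | continuous_of_derivable | |].
      * intros x Hx. rewrite hat_of_nonneg by lra. ring.
      * rewrite Rmult_0_r, sin_0, cos_0, Rmult_1_r. field; auto.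
Qed.

Lemma is_RInt_hat_sin w : is_RInt (fun z => hat z * sin (w * z)) (-1) 1 0.
Proof.
  destruct (Req_EM_T w 0) as [->|Hw].
  - apply (is_RInt_of_antiderivative (fun _ => 0) (fun _ => 0));
      [lra | intros; auto_derive; auto | intros; apply continuous_const | |ring].
    intros x _. rewrite Rmult_0_l, sin_0. ring.
  - replace 0 with ((-1 / w + sin w / (w * w)) + (1 / w - sin w / (w * w))) by (field; auto).
    apply (is_RInt_Chasles_R _ _ 0).
    + apply (is_RInt_of_antiderivative
        (fun z => - (1 + z) * cos (w * z) / w + sin (w * z) / (w * w))
        (fun z => (1 + z) * sin (w * z)));
        [lra | intros; auto_derive; auto; field; auto | continuous_of_derivable | |].
      * intros x Hx. rewrite hat_of_nonpos by lra. ring.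
      * replace (w * -1) with (- w) by ring. rewrite Rmult_0_r, sin_0, cos_0, sin_neg. field; auto.
    + apply (is_RInt_of_antiderivative
        (fun z => - (1 - z) * cos (w * z) / w - sin (w * z) / (w * w))
        (fun z => (1 - z) * sin (w * z)));
        [lra | intros; auto_derive; auto; field; auto | continuous_of_derivable | |].
      * intros x Hx. rewrite hat_of_nonneg by lra. ring.
      * rewrite Rmult_0_r, sin_0, cos_0, Rmult_1_r. field; auto.
Qed.

Lemma is_RInt_hat_cis w b :
  is_RInt (V := C_R_NormedModule) (fun z => scal (hat z) (cis (w * z + b))) (-1) 1
    (scal (hat_ft w) (cis b)).
Proof.
  apply is_RInt_fct_extend_pair; cbn -[hat].
  - replace (hat_ft w * cos b) with (cos b * hat_ft w + - sin b * 0) by ring.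
    eapply is_RInt_ext;
      [|exact (is_RInt_lin2 _ _ _ _ _ _ _ _ (is_RInt_hat_cos w) (is_RInt_hat_sin w))].
    intros x _. rewrite cos_plus. cbn. ring.
  - replace (hat_ft w * sin b) with (sin b * hat_ft w + cos b * 0) by ring.
    eapply is_RInt_ext;
      [|exact (is_RInt_lin2 _ _ _ _ _ _ _ _ (is_RInt_hat_cos w) (is_RInt_hat_sin w))].
    intros x _. rewrite sin_plus. cbn. ring.
Qed.

Lemma sin_sq_le_sq t : sin t * sin t <= t * t.
Proof.
  assert (Hpos : forall t, 0 <= t -> sin t * sin t <= t * t).
  { clear t. intros t Ht. destruct (Rle_lt_dec 1 t).
    - pose proof (SIN_bound t). nra.
    - pose proof PI2_1. assert (0 <= sin t) by (apply sin_ge_0; lra).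
      destruct (Req_dec t 0) as [->|Hn]; [rewrite sin_0; lra|].
      pose proof (sin_lt_x t ltac:(lra)). nra. }
  destruct (Rle_lt_dec 0 t); [auto|].
  rewrite <- (Rmult_opp_opp t t), <- (Rmult_opp_opp (sin t)), <- sin_neg. apply Hpos; lra.
Qed.

Lemma hat_ft_nonneg w : 0 <= hat_ft w.
Proof.
  unfold hat_ft; destruct Req_EM_T as [|Hw]; [lra|].
  pose proof (COS_bound w). assert (0 < w * w) by nra.
  apply Rdiv_le_0_compat; lra.
Qed.

Lemma hat_ft_le_Rpower w g : w <> 0 -> 0 <= g <= 2 -> hat_ft w <= Rpower (Rabs w / 2) (g - 2).
Proof.
  intros Hw Hg. unfold hat_ft; destruct Req_EM_T as [|_]; [contradiction|].
  set (s := Rabs w / 2).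
  assert (Hs : 0 < s) by (unfold s; pose proof (Rabs_pos_lt w Hw); lra).
  assert (Hss : w * w = 4 * (s * s)).
  { assert (Habs : Rabs w * Rabs w = w * w) by (rewrite <- Rabs_mult; apply Rabs_right; nra).
    unfold s; rewrite <- Habs; field. }
  assert (Hcos : 1 - cos w = 2 * (sin (w / 2) * sin (w / 2))).
  { replace w with (2 * (w / 2)) at 1 by field. rewrite cos_2a_sin. ring. }
  pose proof (sin_sq_le_sq (w / 2)). pose proof (SIN_bound (w / 2)).
  destruct (Rle_lt_dec 1 s) as [Hs1|Hs1].
  - apply Rle_trans with (/ (s * s)).
    + rewrite Hss. apply (Rmult_le_reg_r (4 * (s * s))); [nra|].
      field_simplify; nra.
    + replace (/ (s * s)) with (Rpower s (- INR 2))
        by (rewrite Rpower_Ropp, Rpower_pow by lra; simpl; f_equal; ring).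
      apply Rle_Rpower; [lra|]. simpl; lra.
  - apply Rle_trans with 1.
    + apply (Rmult_le_reg_r (w * w)); [nra|]. field_simplify; nra.
    + assert (Hln : ln s < 0) by (rewrite <- ln_1; apply ln_increasing; lra).
      unfold Rpower. pose proof (exp_ineq1_le ((g - 2) * ln s)). nra.
Qed.

Lemma is_RInt_zero {V : NormedModule R_AbsRing} a b : is_RInt (fun _ => @zero V) a b zero.
Proof.
  pose proof (is_RInt_const a b (@zero V)) as Hc.
  now rewrite (@scal_zero_r R_Ring (NormedModule.ModuleSpace R_AbsRing V)) in Hc.
Qed.

Lemma is_RInt_zero_extension {V : NormedModule R_AbsRing} (h : R -> V) a b c d l :
  c <= a -> a <= b -> b <= d -> (forall x, x <= a \/ b <= x -> h x = zero) ->
  is_RInt h a b l -> is_RInt h c d l.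
Proof.
  intros Hca Hab Hbd Hh Hl.
  assert (H0 : forall u v, (forall x, u < x < v -> h x = zero) -> u <= v -> is_RInt h u v zero).
  { intros u v Huv Hle. apply (is_RInt_ext (fun _ => zero)); [|apply is_RInt_zero].
    intros x Hx. rewrite Rmin_left, Rmax_right in Hx by lra. symmetry; apply Huv, Hx. }
  rewrite <- (plus_zero_l l), <- (plus_zero_r l) at 1.
  apply (is_RInt_Chasles h c a d); [apply H0; [intros; apply Hh|]; lra|].
  apply (is_RInt_Chasles h a b d); [exact Hl|]. apply H0; [intros; apply Hh|]; lra.
Qed.

Lemma is_RInt_dilated_hat_cis N a th : 0 < N -> 1 - N <= a -> a + 1 <= 2 * N ->
  is_RInt (V := C_R_NormedModule) (fun x => scal (hat (N * x - a)) (cis (th * x))) (-1) 2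
    (scal (hat_ft (th / N) / N) (cis (th * a / N))).
Proof.
  intros HN Ha1 Ha2.
  set (h := fun z => scal (hat z) (cis (th / N * z + th * a / N)) : C).
  assert (Hh : is_RInt (V := C_R_NormedModule) h (N * -1 + - a) (N * 2 + - a)
                 (scal (hat_ft (th / N)) (cis (th * a / N)))).
  { apply (is_RInt_zero_extension _ (-1) 1); try lra; [|apply is_RInt_hat_cis].
    intros x Hx. unfold h. rewrite hat_eq_0 by exact Hx. exact (scal_zero_l _). }
  pose proof (is_RInt_scal _ _ _ (/ N) _ (is_RInt_comp_lin h N (- a) (-1) 2 _ Hh)) as Hx.
  rewrite scal_assoc in Hx.
  replace (hat_ft (th / N) / N) with (mult (/ N) (hat_ft (th / N))) by (cbn; field; lra).
  eapply is_RInt_ext; [|exact Hx]. intros x _. unfold h.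
  replace (th / N * (N * x + - a) + th * a / N) with (th * x) by (field; lra).
  change (N * x + - a) with (N * x - a).
  apply injective_projections; cbn -[hat cos sin]; field; lra.
Qed.

(** * Linear combinations of dilated hats *)

Lemma scal_C_R (r : R) (z : C) : scal r z = (RtoC r * z)%C.
Proof. destruct z as [a b]. apply injective_projections; cbn; ring. Qed.

Definition hat_comb (N : R) (cs : list (R * Z)) (x : R) : R :=
  fold_right (fun ca s => fst ca * hat (N * x - IZR (snd ca)) + s) 0 cs.

Definition hat_comb_phase (th N : R) (cs : list (R * Z)) : C :=
  fold_right (fun ca s => Cplus (Cmult (RtoC (fst ca)) (cis (th * IZR (snd ca) / N))) s)
    (RtoC 0) cs.

Lemma hat_comb_cons N c a cs x :
  hat_comb N ((c, a) :: cs) x = c * hat (N * x - IZR a) + hat_comb N cs x.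
Proof. reflexivity. Qed.

Lemma hat_comb_phase_cons th N c a cs :
  hat_comb_phase th N ((c, a) :: cs) = (RtoC c * cis (th * IZR a / N) + hat_comb_phase th N cs)%C.
Proof. reflexivity. Qed.

Definition shifts_in_range (N : R) (cs : list (R * Z)) : Prop :=
  List.Forall (fun ca => 1 - N <= IZR (snd ca) /\ IZR (snd ca) + 1 <= 2 * N) cs.

Section Hat_combinations.

Variables (N : R) (cs : list (R * Z)).

Hypothesis HN : 0 < N.

Lemma grid_affine_hat_comb : grid_affine N (hat_comb N cs).
Proof.
  induction cs as [|[c a] cs' IH]; [intros m x _; cbn; ring|].
  apply (grid_affine_plus N (fun x => c * hat (N * x - IZR a))); [|exact IH].
  now apply grid_affine_scal, grid_affine_hat.
Qed.

Lemma continuous_hat_comb x : continuous (hat_comb N cs) x.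
Proof.
  induction cs as [|[c a] cs' IH]; [apply continuous_const|].
  apply (continuous_plus (fun x => c * hat (N * x - IZR a)) (hat_comb N cs')); [|exact IH].
  apply (continuous_mult (fun _ => c)); [apply continuous_const|].
  apply (continuous_comp (fun x => N * x - IZR a) hat); [|apply continuous_hat].
  apply (ex_derive_continuous (V := R_NormedModule)). auto_derive; auto.
Qed.

Hypothesis Hcs : shifts_in_range N cs.

Lemma hat_comb_eq_0 y : y <= -1 \/ 2 <= y -> hat_comb N cs y = 0.
Proof.
  intros Hy. induction cs as [|[c a] cs' IH]; [reflexivity|].
  apply Forall_cons_iff in Hcs as [[Ha1 Ha2] Hcs']. cbn [fst snd] in Ha1, Ha2.
  rewrite hat_comb_cons, (IH Hcs'), hat_eq_0; [ring|].
  destruct Hy as [Hy|Hy]; [left | right].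
  - assert (N * y <= N * -1) by (apply Rmult_le_compat_l; lra). lra.
  - assert (N * 2 <= N * y) by (apply Rmult_le_compat_l; lra). lra.
Qed.

Lemma is_RInt_hat_comb_cis th :
  is_RInt (V := C_R_NormedModule) (fun x => scal (hat_comb N cs x) (cis (th * x))) (-1) 2
    (scal (hat_ft (th / N) / N) (hat_comb_phase th N cs)).
Proof.
  induction cs as [|[c a] cs' IH].
  - apply (is_RInt_ext (fun _ => zero)).
    + intros x _. rewrite scal_C_R. apply injective_projections; cbn; ring.
    + replace (scal _ _) with (@zero C_R_NormedModule)
        by (rewrite scal_C_R; apply injective_projections; cbn; ring).
      apply is_RInt_zero.
  - apply Forall_cons_iff in Hcs as [[Ha1 Ha2] Hcs']. cbn [fst snd] in Ha1, Ha2.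
    pose proof (is_RInt_scal _ _ _ c _ (is_RInt_dilated_hat_cis N (IZR a) th HN Ha1 Ha2)) as Ha.
    pose proof (is_RInt_plus _ _ _ _ _ _ Ha (IH Hcs')) as Hsum.
    replace (scal (hat_ft (th / N) / N) (hat_comb_phase th N ((c, a) :: cs')))
      with (plus (scal c (scal (hat_ft (th / N) / N) (cis (th * IZR a / N))))
                 (scal (hat_ft (th / N) / N) (hat_comb_phase th N cs'))).
    + eapply is_RInt_ext; [|exact Hsum]. intros x _.
      rewrite hat_comb_cons, !scal_C_R.
      apply injective_projections; cbn -[hat hat_comb cos sin]; ring.
    + rewrite hat_comb_phase_cons, !scal_C_R.
      apply injective_projections; cbn -[hat_comb_phase cos sin]; ring.
Qed.

End Hat_combinations.

Lemma Cmod_cis t : Cmod (cis t) = 1.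
Proof.
  unfold Cmod, cis; cbn [fst snd]. rewrite <- sqrt_1. f_equal.
  pose proof (sin2_cos2 t) as H. unfold Rsqr in H. simpl. lra.
Qed.

Lemma Cmod_hat_comb_phase_le th N cs :
  Cmod (hat_comb_phase th N cs) <= fold_right (fun ca s => Rabs (fst ca) + s) 0 cs.
Proof.
  induction cs as [|[c a] cs' IH]; cbn [fold_right fst].
  - unfold hat_comb_phase; cbn [fold_right]. rewrite Cmod_R, Rabs_R0. lra.
  - rewrite hat_comb_phase_cons. eapply Rle_trans; [apply Cmod_triangle|].
    rewrite Cmod_mult, Cmod_R, Cmod_cis. lra.
Qed.

Lemma hat_comb_phase_0 N cs :
  hat_comb_phase 0 N cs = RtoC (fold_right (fun ca s => fst ca + s) 0 cs).
Proof.
  induction cs as [|[c a] cs' IH]; [reflexivity|].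
  rewrite hat_comb_phase_cons, IH. cbn [fold_right fst].
  replace (0 * IZR a / N) with 0 by (unfold Rdiv; ring).
  unfold cis. rewrite cos_0, sin_0. apply injective_projections; cbn; ring.
Qed.

Lemma Cmod_ip_per_hat_comb (f : R -> R) (Nn : nat) (c0 : R) cs q a1 a2 :
  (0 < Nn)%nat -> shifts_in_range (INR Nn) cs -> (forall x, f x = c0 * hat_comb (INR Nn) cs x) ->
  (a1 <= 1)%nat -> (a2 <= 1)%nat ->
  Cmod (ip (Dc a1 (cf (per f))) (Dc a2 (xi q))) =
  Rabs (2 * PI * IZR q) ^ (a1 + a2) *
  (Rabs c0 * (hat_ft (2 * PI * IZR q / INR Nn) / INR Nn) *
   Cmod (hat_comb_phase (2 * PI * IZR q) (INR Nn) cs)).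
Proof.
  intros HNn Hcs Hf Ha1 Ha2.
  assert (HN : 0 < INR Nn) by now apply lt_0_INR.
  set (th := 2 * PI * IZR q).
  rewrite (Cmod_ip_per_xi f Nn q a1 a2
    (scal c0 (scal (hat_ft (th / INR Nn) / INR Nn) (hat_comb_phase th (INR Nn) cs))));
    fold th; auto.
  - rewrite !scal_C_R, !Cmod_mult, !Cmod_R, (Rabs_right (hat_ft (th / INR Nn) / INR Nn)); [ring|].
    apply Rle_ge, Rdiv_le_0_compat; [apply hat_ft_nonneg | exact HN].
  - apply (grid_affine_ext _ (fun x => c0 * hat_comb (INR Nn) cs x)); [intros; symmetry; apply Hf|].
    now apply grid_affine_scal, grid_affine_hat_comb.
  - intros x. apply (continuous_ext (fun x => c0 * hat_comb (INR Nn) cs x));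
      [intros; symmetry; apply Hf|].
    apply (continuous_mult (fun _ => c0)); [apply continuous_const | now apply continuous_hat_comb].
  - intros y Hy. rewrite Hf, hat_comb_eq_0 by (auto; lra). ring.
  - intros y Hy. rewrite Hf, hat_comb_eq_0 by (auto; lra). ring.
  - eapply is_RInt_ext; [|exact (is_RInt_scal _ _ _ c0 _ (is_RInt_hat_comb_cis _ _ HN Hcs th))].
    intros x _. rewrite Hf, !scal_C_R. unfold th.
    apply injective_projections; cbn -[hat_comb cos sin]; ring.
Qed.

(** * The periodized scaling functions and wavelets *)

Lemma INR_pow2 n : INR (2 ^ n) = 2 ^ n.
Proof. rewrite pow_INR. reflexivity. Qed.

Lemma lt_pow2_INR l k : (k < 2 ^ l)%nat -> INR k + 1 <= 2 ^ l.
Proof. intros Hk. rewrite <- INR_pow2, <- S_INR. apply le_INR. lia. Qed.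

Definition phi_terms (k : nat) : list (R * Z) := [(1, Z.of_nat k)].

(* The pairs [(b_j, 2k + j)], [j = -1, ..., 3]. *)
Definition psi_terms (k : nat) : list (R * Z) :=
  [(1/4, (2 * Z.of_nat k - 1)%Z); (1/2, (2 * Z.of_nat k)%Z); (-3/2, (2 * Z.of_nat k + 1)%Z);
   (1/2, (2 * Z.of_nat k + 2)%Z); (1/4, (2 * Z.of_nat k + 3)%Z)].

Lemma dilate_hat_eq l k x :
  dilate hat l k x = Rpower 2 (INR l / 2) * hat_comb (INR (2 ^ l)) (phi_terms k) x.
Proof.
  unfold dilate, hat_comb, phi_terms; cbn [fold_right fst snd].
  rewrite INR_pow2, <- INR_IZR_INZ. ring.
Qed.

Lemma dilate_psi_eq l k x :
  dilate psi l k x = Rpower 2 (INR l / 2) * hat_comb (INR (2 ^ S l)) (psi_terms k) x.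
Proof.
  unfold dilate, psi, bfilt, hat_comb, psi_terms; cbn [fold_right fst snd length seq map nth].
  rewrite INR_pow2. rewrite ?plus_IZR, ?minus_IZR, !mult_IZR, <- !INR_IZR_INZ. simpl.
  rewrite !Rplus_0_r. f_equal. repeat (f_equal; [do 2 f_equal; ring|]). do 2 f_equal; ring.
Qed.

Lemma phi_terms_in_range l k : (k < 2 ^ l)%nat -> shifts_in_range (INR (2 ^ l)) (phi_terms k).
Proof.
  intros Hk. pose proof (lt_pow2_INR l k Hk). pose proof (pos_INR k).
  unfold shifts_in_range, phi_terms.
  repeat apply Forall_cons; try apply Forall_nil; split; cbn [fst snd];
    rewrite INR_pow2, <- INR_IZR_INZ; lra.
Qed.

Lemma psi_terms_in_range l k : (k < 2 ^ l)%nat -> shifts_in_range (INR (2 ^ S l)) (psi_terms k).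
Proof.
  intros Hk. pose proof (lt_pow2_INR l k Hk). pose proof (pos_INR k).
  unfold shifts_in_range, psi_terms.
  repeat apply Forall_cons; try apply Forall_nil; split; cbn [fst snd];
    rewrite INR_pow2, ?plus_IZR, ?minus_IZR, mult_IZR, <- INR_IZR_INZ; simpl; lra.
Qed.

Lemma Cmod_ip_phi l k q a1 a2 : (k < 2 ^ l)%nat -> (a1 <= 1)%nat -> (a2 <= 1)%nat ->
  Cmod (ip (Dc a1 (cf (phi_lk l k))) (Dc a2 (xi q))) =
  Rabs (2 * PI * IZR q) ^ (a1 + a2) *
  (Rpower 2 (INR l / 2) * (hat_ft (2 * PI * IZR q / 2 ^ l) / 2 ^ l)).
Proof.
  intros Hk Ha1 Ha2. unfold phi_lk.
  rewrite (Cmod_ip_per_hat_comb _ (2 ^ l) (Rpower 2 (INR l / 2)) (phi_terms k)); auto.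
  - rewrite INR_pow2, (Rabs_right (Rpower 2 (INR l / 2))) by (apply Rle_ge, Rlt_le, exp_pos).
    unfold hat_comb_phase, phi_terms; cbn [fold_right fst].
    rewrite Cplus_0_r, Cmult_1_l, Cmod_cis. ring.
  - apply Nat.neq_0_lt_0, Nat.pow_nonzero. lia.
  - now apply phi_terms_in_range.
  - apply dilate_hat_eq.
Qed.

Lemma Cmod_ip_psi l k q a1 a2 : (k < 2 ^ l)%nat -> (a1 <= 1)%nat -> (a2 <= 1)%nat ->
  Cmod (ip (Dc a1 (cf (psi_lk l k))) (Dc a2 (xi q))) =
  Rabs (2 * PI * IZR q) ^ (a1 + a2) *
  (Rpower 2 (INR l / 2) * (hat_ft (2 * PI * IZR q / 2 ^ S l) / 2 ^ S l) *
   Cmod (hat_comb_phase (2 * PI * IZR q) (2 ^ S l) (psi_terms k))).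
Proof.
  intros Hk Ha1 Ha2. unfold psi_lk.
  rewrite (Cmod_ip_per_hat_comb _ (2 ^ S l) (Rpower 2 (INR l / 2)) (psi_terms k)); auto.
  - rewrite INR_pow2, (Rabs_right (Rpower 2 (INR l / 2))) by (apply Rle_ge, Rlt_le, exp_pos).
    reflexivity.
  - apply Nat.neq_0_lt_0, Nat.pow_nonzero. lia.
  - now apply psi_terms_in_range.
  - apply dilate_psi_eq.
Qed.

Lemma scaled_hat_ft_le l n th g : th <> 0 -> 0 <= g <= 2 ->
  Rpower 2 (INR l / 2) * (hat_ft (th / 2 ^ n) / 2 ^ n) <=
  Rpower 2 (INR l / 2 + INR n * (1 - g)) * Rpower (Rabs th / 2) (g - 2).
Proof.
  intros Hth Hg.
  assert (HN : 0 < 2 ^ n) by (apply pow_lt; lra).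
  assert (HP : 0 < Rabs th / 2) by (pose proof (Rabs_pos_lt th Hth); lra).
  apply Rle_trans with (Rpower 2 (INR l / 2) * (Rpower (Rabs th / 2 / 2 ^ n) (g - 2) / 2 ^ n)).
  - apply Rmult_le_compat_l; [apply Rlt_le, exp_pos|].
    apply Rmult_le_compat_r; [apply Rlt_le, Rinv_0_lt_compat, HN|].
    replace (Rabs th / 2 / 2 ^ n) with (Rabs (th / 2 ^ n) / 2)
      by (rewrite Rabs_div, (Rabs_right (2 ^ n)) by lra; field; lra).
    apply hat_ft_le_Rpower; [|exact Hg].
    apply Rmult_integral_contrapositive; split; [exact Hth | apply Rinv_neq_0_compat; lra].
  - right. rewrite <- (Rpower_pow n 2) by lra. unfold Rpower.
    rewrite ln_div, ln_exp by (apply exp_pos || exact HP).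
    unfold Rdiv. rewrite <- exp_Ropp, <- !exp_plus. f_equal. ring.
Qed.

Lemma Rabs_2PI_IZR q : Rabs (2 * PI * IZR q) = 2 * Rabs (PI * IZR q).
Proof. rewrite Rmult_assoc, Rabs_mult, (Rabs_right 2) by lra. reflexivity. Qed.

Lemma IZR_2PI_neq_0 q : q <> 0%Z -> 2 * PI * IZR q <> 0.
Proof.
  intros Hq. pose proof PI_RGT_0.
  apply Rmult_integral_contrapositive; split; [lra | now apply not_0_IZR].
Qed.

Lemma pow_mul_Rpower P (n : nat) e : 0 < P -> P ^ n * Rpower P e = Rpower P (e + INR n).
Proof. intros HP. rewrite Rpower_plus, Rpower_pow by exact HP. ring. Qed.

Lemma Cmod_psi_phase_le th N k : Cmod (hat_comb_phase th N (psi_terms k)) <= 3.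
Proof.
  eapply Rle_trans; [apply Cmod_hat_comb_phase_le|].
  unfold psi_terms; cbn [fold_right fst].
  rewrite (Rabs_left (-3/2)), !Rabs_right by lra. lra.
Qed.

Lemma three_le_bnorm : 3 <= bnorm2 * sqrt (INR bnorm0).
Proof.
  assert (H0 : bnorm0 = 5%nat).
  { unfold bnorm0, bfilt. cbn [filter].
    repeat (destruct Req_EM_T; [lra|]). reflexivity. }
  rewrite H0. unfold bnorm2, bfilt. cbn [map fold_right].
  rewrite <- sqrt_mult_alt by lra.
  rewrite <- (sqrt_square 3) by lra. apply sqrt_le_1_alt. simpl. lra.
Qed.

Lemma Cmod_ip_phi_le l k q a1 a2 g :
  (k < 2 ^ l)%nat -> q <> 0%Z -> (a1 <= 1)%nat -> (a2 <= 1)%nat -> 0 <= g <= 2 ->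
  Cmod (ip (Dc a1 (cf (phi_lk l k))) (Dc a2 (xi q))) <=
  2 ^ (a1 + a2) * Rpower 2 ((3/2 - g) * INR l)
  * Rpower (Rabs (PI * IZR q)) (g - 2 + INR a1 + INR a2).
Proof.
  intros Hk Hq Ha1 Ha2 Hg.
  assert (HP : 0 < Rabs (PI * IZR q)) by (pose proof (IZR_2PI_neq_0 q Hq); apply Rabs_pos_lt; nra).
  rewrite Cmod_ip_phi by auto.
  eapply Rle_trans.
  { apply Rmult_le_compat_l; [apply pow_le, Rabs_pos|].
    exact (scaled_hat_ft_le l l _ g (IZR_2PI_neq_0 q Hq) Hg). }
  right. rewrite !Rabs_2PI_IZR, Rpow_mult_distr.
  replace (2 * Rabs (PI * IZR q) / 2) with (Rabs (PI * IZR q)) by field.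
  replace (INR l / 2 + INR l * (1 - g)) with ((3/2 - g) * INR l) by field.
  replace (g - 2 + INR a1 + INR a2) with (g - 2 + INR (a1 + a2)) by (rewrite plus_INR; ring).
  rewrite <- pow_mul_Rpower by exact HP. ring.
Qed.

Lemma Cmod_ip_psi_le l k q a1 a2 g :
  (k < 2 ^ l)%nat -> q <> 0%Z -> (a1 <= 1)%nat -> (a2 <= 1)%nat -> 0 <= g <= 2 ->
  Cmod (ip (Dc a1 (cf (psi_lk l k))) (Dc a2 (xi q))) <=
  Rpower 2 (INR a1 + INR a2 + 1 - g) * bnorm2 * sqrt (INR bnorm0)
  * Rpower 2 ((3/2 - g) * INR l) * Rpower (Rabs (PI * IZR q)) (g - 2 + INR a1 + INR a2).
Proof.
  intros Hk Hq Ha1 Ha2 Hg.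
  assert (HP : 0 < Rabs (PI * IZR q)) by (pose proof (IZR_2PI_neq_0 q Hq); apply Rabs_pos_lt; nra).
  rewrite Cmod_ip_psi by auto.
  eapply Rle_trans.
  { apply Rmult_le_compat_l; [apply pow_le, Rabs_pos|].
    apply Rmult_le_compat;
      [| apply Cmod_ge_0 | exact (scaled_hat_ft_le l (S l) _ g (IZR_2PI_neq_0 q Hq) Hg) |].
    - apply Rmult_le_pos; [apply Rlt_le, exp_pos|].
      apply Rdiv_le_0_compat; [apply hat_ft_nonneg | apply pow_lt; lra].
    - eapply Rle_trans; [apply Cmod_psi_phase_le | apply three_le_bnorm]. }
  right. rewrite !Rabs_2PI_IZR, Rpow_mult_distr.
  replace (2 * Rabs (PI * IZR q) / 2) with (Rabs (PI * IZR q)) by field.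
  replace (INR l / 2 + INR (S l) * (1 - g)) with ((3/2 - g) * INR l + (1 - g))
    by (rewrite S_INR; field).
  replace (INR a1 + INR a2 + 1 - g) with (1 - g + INR (a1 + a2)) by (rewrite plus_INR; ring).
  replace (g - 2 + INR a1 + INR a2) with (g - 2 + INR (a1 + a2)) by (rewrite plus_INR; ring).
  rewrite <- !pow_mul_Rpower, Rpower_plus by lra. ring.
Qed.

Lemma Cmod_ip_phi_xi0 l k a1 a2 : (k < 2 ^ l)%nat -> (a1 <= 1)%nat -> (a2 <= 1)%nat ->
  Cmod (ip (Dc a1 (cf (phi_lk l k))) (Dc a2 (xi 0))) = 0 ^ (a1 + a2) * Rpower 2 (- INR l / 2).
Proof.
  intros Hk Ha1 Ha2. rewrite Cmod_ip_phi by auto.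
  replace (2 * PI * IZR 0) with 0 by (simpl; ring).
  replace (0 / 2 ^ l) with 0 by (unfold Rdiv; ring).
  unfold hat_ft; destruct Req_EM_T as [_|]; [|lra].
  rewrite Rabs_R0, <- (Rpower_pow l 2) by lra. unfold Rpower, Rdiv.
  rewrite Rmult_1_l, <- exp_Ropp, <- exp_plus. apply f_equal, f_equal. field.
Qed.

Lemma Cmod_ip_psi_xi0 l k a1 a2 : (k < 2 ^ l)%nat -> (a1 <= 1)%nat -> (a2 <= 1)%nat ->
  Cmod (ip (Dc a1 (cf (psi_lk l k))) (Dc a2 (xi 0))) = 0.
Proof.
  intros Hk Ha1 Ha2. rewrite Cmod_ip_psi by auto.
  replace (2 * PI * IZR 0) with 0 by (simpl; ring).
  rewrite hat_comb_phase_0. unfold psi_terms; cbn [fold_right fst].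
  replace (1 / 4 + (1 / 2 + (-3 / 2 + (1 / 2 + (1 / 4 + 0))))) with 0 by field.
  rewrite Cmod_R, Rabs_R0. ring.
Qed.

Theorem lemma4p1 (l0 : nat) (Hl0 : (2 <= l0)%nat) :
  (forall (l k : nat) (q : Z) (a1 a2 : nat) (g : R),
     (l0 <= l)%nat -> (k < 2 ^ l)%nat -> q <> 0%Z ->
     (a1 <= 1)%nat -> (a2 <= 1)%nat -> 0 <= g <= 2 ->
     Cmod (ip (Dc a1 (cf (phi_lk l k))) (Dc a2 (xi q)))
       <= 2 ^ (a1 + a2) * Rpower 2 ((3/2 - g) * INR l)
          * Rpower (Rabs (PI * IZR q)) (g - 2 + INR a1 + INR a2)
     /\
     Cmod (ip (Dc a1 (cf (psi_lk l k))) (Dc a2 (xi q)))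
       <= Rpower 2 (INR a1 + INR a2 + 1 - g) * bnorm2 * sqrt (INR bnorm0)
          * Rpower 2 ((3/2 - g) * INR l)
          * Rpower (Rabs (PI * IZR q)) (g - 2 + INR a1 + INR a2))
  /\
  (forall (l k : nat),
     (l0 <= l)%nat -> (k < 2 ^ l)%nat ->
     Cmod (ip (Dc 1 (cf (phi_lk l k))) (Dc 1 (xi 0))) = 0 /\
     Cmod (ip (Dc 1 (cf (psi_lk l k))) (Dc 1 (xi 0))) = 0 /\
     Cmod (ip (Dc 1 (cf (phi_lk l k))) (xi 0)) = 0 /\
     Cmod (ip (Dc 1 (cf (psi_lk l k))) (xi 0)) = 0 /\
     Cmod (ip (cf (phi_lk l k)) (xi 0)) = Rpower 2 (- INR l / 2) /\
     Cmod (ip (cf (psi_lk l k)) (xi 0)) = 0).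
Proof.
  split.
  - intros l k q a1 a2 g _ Hk Hq Ha1 Ha2 Hg.
    split; [apply Cmod_ip_phi_le | apply Cmod_ip_psi_le]; auto.
  - intros l k _ Hk.
    repeat split.
    + rewrite (Cmod_ip_phi_xi0 l k 1 1) by lia. simpl; ring.
    + apply (Cmod_ip_psi_xi0 l k 1 1); lia.
    + etransitivity; [apply (Cmod_ip_phi_xi0 l k 1 0); lia | simpl; ring].
    + apply (Cmod_ip_psi_xi0 l k 1 0); lia.
    + etransitivity; [apply (Cmod_ip_phi_xi0 l k 0 0); lia | simpl; ring].
    + apply (Cmod_ip_psi_xi0 l k 0 0); lia.
Qed.
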